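(* Consider any continuous-time query algorithm of duration $T$ (in the model described in the context) and let $|\phi_x(t)\rangle$ denote its state at time $t\in[0,T]$ on input $x\in\mathbb{X}$ (unit vectors, differentiable in $t$, evolving under $i\frac{d}{dt}|\phi_x(t)\rangle=H_x(t)|\phi_x(t)\rangle$). Let $\Gamma$ be any Hermitian $|\mathbb{X}|\times|\mathbb{X}|$ matrix and $v\in\mathbb{C}^{\mathbb X}$ a unit vector, and define $$W(t)=\sum_{x,y\in\mathbb{X}}\overline{v_x}\,v_y\,\Gamma_{x,y}\,\langle\phi_x(t)|\phi_y(t)\rangle .$$ Then for all $t\in[0,T]$ (where the Hamiltonian is continuous), $$\Big|\frac{dW(t)}{dt}\Big|\le 2\max_{j\in[n]}\|\Gamma\circ\Delta_j\|,$$ and consequently $|W(T)-W(0)|\le 2T\max_j\|\Gamma\circ\Delta_j\|$.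
   Context: $(A\circ B)_{ij}=A_{ij}B_{ij}$; $\|A\|$ is the operator norm. For $j\in[n]$, $\Delta_j$ is the $|\mathbb{X}|\times|\mathbb{X}|$ matrix with $(\Delta_j)_{x,y}=1-\delta_{x_j,y_j}$, where $\mathbb{X}\subseteq\Sigma^n$, $\Sigma$ finite. Continuous-time query model: fix Hermitian $h(y)$, $y\in\Sigma$, on $\mathbb{C}^r$ with $\|h(y)\|\le1$; $H_{\mathcal Q}(x)=\sum_{j=1}^n|j\rangle\langle j|\otimes h(x_j)$. The algorithm acts on $\mathcal{H}=(\mathbb{C}^n\otimes\mathbb{C}^r\otimes\mathbb{C}^w)\oplus\mathcal{H}'$ via $H_x(t)=H_{\mathcal D}(t)+\alpha(t)\widetilde H_{\mathcal Q}(x)$, where $\widetilde H_{\mathcal Q}(x)$ acts as $H_{\mathcal Q}(x)\otimes I$ on the first summand and $0$ on $\mathcal H'$, $H_{\mathcal D}(t)$ is an input-independent Hermitian operator (piecewise continuous in $t$), and $\alpha:[0,T]\to\mathbb{R}$ with $|\alpha(t)|\le1$. The initial states $|\phi_x(0)\rangle$ are arbitrary unit vectors. *)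

From Stdlib Require Import Reals Lra List ClassicalEpsilon.
Import ListNotations.
Open Scope R_scope.

Record Cpx : Type := mkC { re : R; im : R }.
Definition C0 : Cpx := mkC 0 0.
Definition C1 : Cpx := mkC 1 0.
Definition RtoC (a : R) : Cpx := mkC a 0.
Definition Cadd (z w : Cpx) : Cpx := mkC (re z + re w) (im z + im w).
Definition Copp (z : Cpx) : Cpx := mkC (- re z) (- im z).
Definition Csub (z w : Cpx) : Cpx := Cadd z (Copp w).
Definition Cmul (z w : Cpx) : Cpx :=
  mkC (re z * re w - im z * im w) (re z * im w + im z * re w).
Definition Cconj (z : Cpx) : Cpx := mkC (re z) (- im z).
Definition Cmod (z : Cpx) : R := sqrt (re z ^ 2 + im z ^ 2).

Definition sumC {A : Type} (l : list A) (f : A -> Cpx) : Cpx :=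
  fold_right (fun a acc => Cadd (f a) acc) C0 l.
Definition sumR {A : Type} (l : list A) (f : A -> R) : R :=
  fold_right (fun a acc => f a + acc) 0 l.

Definition vnorm {A : Type} (l : list A) (u : A -> Cpx) : R :=
  sqrt (sumR l (fun k => re (u k) ^ 2 + im (u k) ^ 2)).
Definition matvec {A : Type} (l : list A) (M : A -> A -> Cpx) (u : A -> Cpx) : A -> Cpx :=
  fun k => sumC l (fun k' => Cmul (M k k') (u k')).
Definition inner {A : Type} (l : list A) (u v : A -> Cpx) : Cpx :=
  sumC l (fun k => Cmul (Cconj (u k)) (v k)).
Definition hermitian {A : Type} (l : list A) (M : A -> A -> Cpx) : Prop :=
  forall k k', In k l -> In k' l -> M k' k = Cconj (M k k').

(** Operator norm: the least upper bound of ||M u|| over vectors with ||u|| <= 1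
    (this set is nonempty and bounded, so the lub exists; we pick it by
    classical choice). *)
Definition opnorm_set {A : Type} (l : list A) (M : A -> A -> Cpx) : R -> Prop :=
  fun s => exists u : A -> Cpx, vnorm l u <= 1 /\ s = vnorm l (matvec l M u).
Definition opnorm {A : Type} (l : list A) (M : A -> A -> Cpx) : R :=
  epsilon (inhabits 0) (fun s => is_lub (opnorm_set l M) s).

Definition hadamard {A : Type} (M N : A -> A -> Cpx) : A -> A -> Cpx :=
  fun k k' => Cmul (M k k') (N k k').

(** maximum of a finite list of reals (0 for the empty list; all our
    entries are norms, hence nonnegative) *)
Definition maxR (l : list R) : R := fold_right Rmax 0 l.

(** Inputs: X = {X 0, ..., X (m-1)} subset of Sig^n, input X p has letters
    X p j for j < n.  Delta_j (on positions of X) *)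
Definition DeltaMat {Sig : Type} (Sig_dec : forall a b : Sig, {a = b} + {a <> b})
  (X : nat -> nat -> Sig) (j : nat) : nat -> nat -> Cpx :=
  fun p q => if Sig_dec (X p j) (X q j) then C0 else C1.

(** Basis of H = (Cpx^n (x) Cpx^r (x) Cpx^w) (+) H', dim H' = d:
    inl (j,a,b) is |j>|a>|b>, inr k is the k-th basis vector of H'. *)
Definition Idx : Type := ((nat * nat) * nat + nat)%type.
Definition idx_list (n r w d : nat) : list Idx :=
  map inl (flat_map (fun j => flat_map (fun a => map (fun b => (j, a, b)) (seq 0 w))
                                         (seq 0 r)) (seq 0 n))
  ++ map inr (seq 0 d).

(** tilde H_Q(x) = (sum_j |j><j| (x) h(x_j)) (x) I_w on the first summand, 0 on H'. *)
Definition HQ {Sig : Type} (h : Sig -> nat -> nat -> Cpx) (x : nat -> Sig) : Idx -> Idx -> Cpx :=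
  fun k k' =>
    match k, k' with
    | inl (j, a, b), inl (j', a', b') =>
        if (Nat.eqb j j' && Nat.eqb b b')%bool then h (x j) a a' else C0
    | _, _ => C0
    end.

Definition Hx {Sig : Type} (HD : R -> Idx -> Idx -> Cpx) (alpha : R -> R)
  (h : Sig -> nat -> nat -> Cpx) (x : nat -> Sig) (t : R) : Idx -> Idx -> Cpx :=
  fun k k' => Cadd (HD t k k') (Cmul (RtoC (alpha t)) (HQ h x k k')).

Definition ham_continuous_at (l : list Idx) (HD : R -> Idx -> Idx -> Cpx) (alpha : R -> R)
  (t : R) : Prop :=
  continuity_pt alpha t /\
  forall k k', In k l -> In k' l ->
    continuity_pt (fun s => re (HD s k k')) t /\ continuity_pt (fun s => im (HD s k k')) t.

Definition Wfun (m : nat) (l : list Idx) (v : nat -> Cpx) (Gamma : nat -> nat -> Cpx)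
  (phi : nat -> R -> Idx -> Cpx) (t : R) : Cpx :=
  sumC (seq 0 m) (fun p => sumC (seq 0 m) (fun q =>
    Cmul (Cmul (Cmul (Cconj (v p)) (v q)) (Gamma p q)) (inner l (phi p t) (phi q t)))).

From Pilot Require Import Defs.
From Stdlib Require Import Reals List ClassicalEpsilon.
From Stdlib Require Import Lra Lia Psatz FunctionalExtensionality Morphisms.
From Coquelicot Require Complex.
Open Scope R_scope.

(* Along the Schrodinger equation, d/dt <phi_x|phi_y> = i (<H_x phi_x|phi_y> - <phi_x|H_y phi_y>).
   The input-independent driving Hamiltonian cancels by hermiticity, and in the query term
   the block of index j cancels whenever x_j = y_j, by hermiticity of h(x_j).  Hence
   dW/dt = i alpha(t) sum_{j,b,a} (<g|(Gamma o Delta_j) u> - <u|(Gamma o Delta_j) g>), where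
   u_x = v_x <j,a,b|phi_x> and g_x = v_x <j,a,b|h(x_j) phi_x>.  Each inner product is at most
   ||Gamma o Delta_j|| (|g|^2 + |u|^2) / 2 by AM-GM, and as ||h|| <= 1 and the states and v
   are unit vectors, the squared norms sum to at most 2.  The bound on W(T) - W(0) follows
   from the mean value theorem on each interval where the Hamiltonian is continuous. *)

Lemma Cpx_ext (z w : Cpx) : re z = re w -> im z = im w -> z = w.
Proof. destruct z, w; simpl; intros; subst; reflexivity. Qed.

Lemma Cpx_ring_theory : ring_theory C0 Defs.C1 Cadd Cmul Csub Copp (@eq Cpx).
Proof.
  constructor; intros; apply Cpx_ext; unfold Cadd, Cmul, Csub, Copp, C0, Defs.C1; simpl; ring.
Qed.
Add Ring Cpx_ring : Cpx_ring_theory.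

Lemma Cconj_mul z w : Cconj (Cmul z w) = Cmul (Cconj z) (Cconj w).
Proof. apply Cpx_ext; simpl; ring. Qed.

Definition Cnorm2 (z : Cpx) : R := re z ^ 2 + im z ^ 2.

Lemma Cnorm2_ge_0 z : 0 <= Cnorm2 z.
Proof. unfold Cnorm2. nra. Qed.

Lemma Cmod_triangle z w : Cmod (Cadd z w) <= Cmod z + Cmod w.
Proof. exact (Complex.Cmod_triangle (re z, im z) (re w, im w)). Qed.
Lemma Cmod_mult z w : Cmod (Cmul z w) = Cmod z * Cmod w.
Proof. exact (Complex.Cmod_mult (re z, im z) (re w, im w)). Qed.
Lemma Cmod_conj z : Cmod (Cconj z) = Cmod z.
Proof. exact (Complex.Cmod_conj (re z, im z)). Qed.
Lemma Cmod_opp z : Cmod (Copp z) = Cmod z.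
Proof. unfold Cmod, Copp; simpl; f_equal; ring. Qed.
Lemma Cmod_ge_0 z : 0 <= Cmod z.
Proof. apply sqrt_pos. Qed.
Lemma Cmod_sqr z : Cmod z * Cmod z = Cnorm2 z.
Proof. unfold Cmod, Cnorm2. rewrite sqrt_sqrt; [ring | nra]. Qed.
Lemma Cmod_C0 : Cmod C0 = 0.
Proof. unfold Cmod, C0; simpl. replace (0 * (0 * 1) + 0 * (0 * 1)) with 0 by ring. apply sqrt_0. Qed.
Lemma Cmod_imag a : Cmod (mkC 0 a) = Rabs a.
Proof.
  unfold Cmod; simpl. rewrite <- sqrt_Rsqr_abs. f_equal. unfold Rsqr. ring.
Qed.

Lemma Cmod_sub_le z w : Cmod (Csub z w) <= Cmod z + Cmod w.
Proof. unfold Csub. rewrite <- (Cmod_opp w). apply Cmod_triangle. Qed.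

Lemma Cmod_conj_mul_le (a c : Cpx) (g : R) : 0 < g ->
  Cmod (Cmul (Cconj a) c) <= (g * Cnorm2 a + / g * Cnorm2 c) / 2.
Proof.
  intros Hg. rewrite Cmod_mult, Cmod_conj, <- !Cmod_sqr.
  assert (Ha := Cmod_ge_0 a). assert (Hc := Cmod_ge_0 c).
  set (x := Cmod a) in *. set (y := Cmod c) in *.
  assert (Hsq : 0 <= (g * x - y) ^ 2 / g).
  { apply Rmult_le_pos; [apply pow2_ge_0 | left; apply Rinv_0_lt_compat; lra]. }
  assert (E : (g * x - y) ^ 2 / g = g * (x * x) + / g * (y * y) - 2 * (x * y)) by (field; lra).
  lra.
Qed.

Lemma Rdot2_le_sqrt a b x y : a * x + b * y <= sqrt (a ^ 2 + b ^ 2) * sqrt (x ^ 2 + y ^ 2).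
Proof.
  assert (Hab : 0 <= a ^ 2 + b ^ 2) by nra. assert (Hxy : 0 <= x ^ 2 + y ^ 2) by nra.
  rewrite <- sqrt_mult by lra.
  apply Rle_trans with (Rabs (a * x + b * y)); [apply Rle_abs|].
  rewrite <- sqrt_Rsqr_abs. apply sqrt_le_1_alt. unfold Rsqr.
  assert (0 <= (a * y - b * x) ^ 2) by apply pow2_ge_0. nra.
Qed.

Section Sums.
Context {A : Type}.
Implicit Types (l : list A) (f g : A -> Cpx) (F G : A -> R).

Lemma sumC_app l1 l2 f : sumC (l1 ++ l2) f = Cadd (sumC l1 f) (sumC l2 f).
Proof. induction l1; simpl; [ring | rewrite IHl1; ring]. Qed.
Lemma sumC_add l f g : sumC l (fun a => Cadd (f a) (g a)) = Cadd (sumC l f) (sumC l g).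
Proof. induction l; simpl; [ring | rewrite IHl; ring]. Qed.
Lemma sumC_sub l f g : sumC l (fun a => Csub (f a) (g a)) = Csub (sumC l f) (sumC l g).
Proof. induction l; simpl; [ring | rewrite IHl; ring]. Qed.
Lemma sumC_mull l c f : sumC l (fun a => Cmul c (f a)) = Cmul c (sumC l f).
Proof. induction l; simpl; [ring | rewrite IHl; ring]. Qed.
Lemma sumC_mulr l c f : sumC l (fun a => Cmul (f a) c) = Cmul (sumC l f) c.
Proof. induction l; simpl; [ring | rewrite IHl; ring]. Qed.
Lemma sumC_ext l f g : (forall a, In a l -> f a = g a) -> sumC l f = sumC l g.
Proof. induction l; simpl; intros H; auto. rewrite H, IHl; auto. Qed.
Lemma sumC_eq0 l f : (forall a, In a l -> f a = C0) -> sumC l f = C0.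
Proof. induction l; simpl; intros H; auto. rewrite H, IHl; auto. ring. Qed.
Lemma Cconj_sumC l f : Cconj (sumC l f) = sumC l (fun a => Cconj (f a)).
Proof.
  induction l; simpl; [|rewrite <- IHl]; apply Cpx_ext; simpl; ring.
Qed.

Lemma sumR_app l1 l2 F : sumR (l1 ++ l2) F = sumR l1 F + sumR l2 F.
Proof. induction l1; simpl; [ring | rewrite IHl1; ring]. Qed.
Lemma sumR_add l F G : sumR l (fun a => F a + G a) = sumR l F + sumR l G.
Proof. induction l; simpl; [ring | rewrite IHl; ring]. Qed.
Lemma sumR_mull l c F : sumR l (fun a => c * F a) = c * sumR l F.
Proof. induction l; simpl; [ring | rewrite IHl; ring]. Qed.
Lemma sumR_ext l F G : (forall a, In a l -> F a = G a) -> sumR l F = sumR l G.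
Proof. induction l; simpl; intros H; auto. rewrite H, IHl; auto. Qed.
Lemma sumR_le l F G : (forall a, In a l -> F a <= G a) -> sumR l F <= sumR l G.
Proof.
  induction l; simpl; intros H; [lra|].
  specialize (IHl (fun b Hb => H b (or_intror Hb))). specialize (H a (or_introl eq_refl)). lra.
Qed.
Lemma sumR_ge0 l F : (forall a, In a l -> 0 <= F a) -> 0 <= sumR l F.
Proof.
  induction l; simpl; intros H; [lra|].
  specialize (IHl (fun b Hb => H b (or_intror Hb))). specialize (H a (or_introl eq_refl)). lra.
Qed.
Lemma sumR_ge_term l F a : (forall b, In b l -> 0 <= F b) -> In a l -> F a <= sumR l F.
Proof.
  induction l as [|b l IHl]; simpl; intros H Ha; [contradiction|].
  assert (Hb := H b (or_introl eq_refl)).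
  assert (Hl : 0 <= sumR l F) by (apply sumR_ge0; auto).
  destruct Ha as [<-|Ha]; [lra|].
  assert (F a <= sumR l F) by (apply IHl; auto). lra.
Qed.

Lemma Cmod_sumC_le l f F : (forall a, In a l -> Cmod (f a) <= F a) -> Cmod (sumC l f) <= sumR l F.
Proof.
  induction l; simpl; intros H; [rewrite Cmod_C0; lra|].
  eapply Rle_trans; [apply Cmod_triangle|].
  specialize (IHl (fun b Hb => H b (or_intror Hb))). specialize (H a (or_introl eq_refl)). lra.
Qed.
End Sums.

Global Instance sumC_pointwise {A} (l : list A) :
  Proper (pointwise_relation A eq ==> eq) (sumC l).
Proof. intros f g H. apply sumC_ext; auto. Qed.
Global Instance sumR_pointwise {A} (l : list A) :
  Proper (pointwise_relation A eq ==> eq) (sumR l).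
Proof. intros f g H. apply sumR_ext; auto. Qed.

Lemma sumC_map {A B} (l : list A) (g : A -> B) f : sumC (map g l) f = sumC l (fun a => f (g a)).
Proof. induction l; simpl; auto. rewrite IHl; auto. Qed.
Lemma sumR_map {A B} (l : list A) (g : A -> B) f : sumR (map g l) f = sumR l (fun a => f (g a)).
Proof. induction l; simpl; auto. rewrite IHl; auto. Qed.
Lemma sumC_flat_map {A B} (l : list A) (g : A -> list B) f :
  sumC (flat_map g l) f = sumC l (fun a => sumC (g a) f).
Proof. induction l; simpl; auto. rewrite sumC_app, IHl; auto. Qed.
Lemma sumR_flat_map {A B} (l : list A) (g : A -> list B) f :
  sumR (flat_map g l) f = sumR l (fun a => sumR (g a) f).
Proof. induction l; simpl; auto. rewrite sumR_app, IHl; auto. Qed.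
Lemma sumC_swap {A B} (l1 : list A) (l2 : list B) F :
  sumC l1 (fun a => sumC l2 (fun b => F a b)) = sumC l2 (fun b => sumC l1 (fun a => F a b)).
Proof.
  induction l1; simpl; [rewrite sumC_eq0; auto|]. rewrite IHl1, <- sumC_add. auto.
Qed.
Lemma sumR_swap {A B} (l1 : list A) (l2 : list B) F :
  sumR l1 (fun a => sumR l2 (fun b => F a b)) = sumR l2 (fun b => sumR l1 (fun a => F a b)).
Proof.
  induction l1; simpl.
  - induction l2; simpl; auto. rewrite <- IHl2; ring.
  - rewrite IHl1, <- sumR_add. auto.
Qed.

Lemma sumC_swap_2_3 {A B C D E} (l1 : list A) (l2 : list B) (k1 : list C) (k2 : list D)
  (k3 : list E) F :
  sumC l1 (fun p => sumC l2 (fun q => sumC k1 (fun j => sumC k2 (fun b => sumC k3 (fun a =>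
    F p q j b a))))) =
  sumC k1 (fun j => sumC k2 (fun b => sumC k3 (fun a => sumC l1 (fun p => sumC l2 (fun q =>
    F p q j b a))))).
Proof.
  setoid_rewrite (sumC_swap l2 k1). rewrite (sumC_swap l1 k1). apply sumC_ext; intros j _.
  setoid_rewrite (sumC_swap l2 k2). rewrite (sumC_swap l1 k2). apply sumC_ext; intros b _.
  setoid_rewrite (sumC_swap l2 k3). apply sumC_swap.
Qed.
Lemma maxR_ge_0 l : 0 <= maxR l.
Proof. induction l; simpl; [lra|]. eapply Rle_trans; [exact IHl | apply Rmax_r]. Qed.
Lemma maxR_ge l x : In x l -> x <= maxR l.
Proof.
  induction l; simpl; intros H; [contradiction|]. destruct H as [->|H]; [apply Rmax_l|].
  eapply Rle_trans; [apply IHl; auto | apply Rmax_r].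
Qed.

(** * Derivatives and the mean value theorem *)

Definition Cderiv (f : R -> Cpx) (t : R) (z : Cpx) : Prop :=
  derivable_pt_lim (fun s => re (f s)) t (re z) /\ derivable_pt_lim (fun s => im (f s)) t (im z).
Definition Ccont (f : R -> Cpx) (t : R) : Prop :=
  continuity_pt (fun s => re (f s)) t /\ continuity_pt (fun s => im (f s)) t.

Lemma derivable_pt_lim_eq f t a b : derivable_pt_lim f t a -> a = b -> derivable_pt_lim f t b.
Proof. intros; subst; auto. Qed.
Lemma Cderiv_eq f t a b : Cderiv f t a -> a = b -> Cderiv f t b.
Proof. intros; subst; auto. Qed.

Lemma Cderiv_const c t : Cderiv (fun _ => c) t C0.
Proof. split; apply derivable_pt_lim_const. Qed.
Lemma Cderiv_add f g t a b : Cderiv f t a -> Cderiv g t b ->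
  Cderiv (fun s => Cadd (f s) (g s)) t (Cadd a b).
Proof. intros [H1 H2] [H3 H4]; split; simpl; apply derivable_pt_lim_plus; auto. Qed.
Lemma Cderiv_mul f g t a b : Cderiv f t a -> Cderiv g t b ->
  Cderiv (fun s => Cmul (f s) (g s)) t (Cadd (Cmul a (g t)) (Cmul (f t) b)).
Proof.
  intros [H1 H2] [H3 H4]; split; simpl.
  - eapply derivable_pt_lim_eq; [apply derivable_pt_lim_minus; apply derivable_pt_lim_mult; eauto|].
    cbv beta; ring.
  - eapply derivable_pt_lim_eq; [apply derivable_pt_lim_plus; apply derivable_pt_lim_mult; eauto|].
    cbv beta; ring.
Qed.
Lemma Cderiv_scal c f t a : Cderiv f t a -> Cderiv (fun s => Cmul c (f s)) t (Cmul c a).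
Proof.
  intros H. eapply Cderiv_eq; [apply Cderiv_mul; [apply Cderiv_const | exact H]|]. cbv beta; ring.
Qed.
Lemma Cderiv_conj f t a : Cderiv f t a -> Cderiv (fun s => Cconj (f s)) t (Cconj a).
Proof. intros [H1 H2]; split; simpl; auto. apply derivable_pt_lim_opp; auto. Qed.
Lemma Cderiv_sumC {A} (l : list A) F F' t : (forall a, In a l -> Cderiv (F a) t (F' a)) ->
  Cderiv (fun s => sumC l (fun a => F a s)) t (sumC l F').
Proof. induction l; simpl; intros H; [apply Cderiv_const | apply Cderiv_add; auto]. Qed.

Lemma Ccont_const c t : Ccont (fun _ => c) t.
Proof. split; apply continuity_pt_const; intros ? ?; auto. Qed.
Lemma Ccont_add f g t : Ccont f t -> Ccont g t -> Ccont (fun s => Cadd (f s) (g s)) t.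
Proof. intros [H1 H2] [H3 H4]; split; simpl; apply continuity_pt_plus; auto. Qed.
Lemma Ccont_mul f g t : Ccont f t -> Ccont g t -> Ccont (fun s => Cmul (f s) (g s)) t.
Proof.
  intros [H1 H2] [H3 H4]; split; simpl.
  - apply continuity_pt_minus; apply continuity_pt_mult; auto.
  - apply continuity_pt_plus; apply continuity_pt_mult; auto.
Qed.
Lemma Ccont_conj f t : Ccont f t -> Ccont (fun s => Cconj (f s)) t.
Proof. intros [H1 H2]; split; simpl; auto. apply continuity_pt_opp; auto. Qed.
Lemma Ccont_sumC {A} (l : list A) F t : (forall a, In a l -> Ccont (F a) t) ->
  Ccont (fun s => sumC l (fun a => F a s)) t.
Proof. induction l; simpl; intros H; [apply Ccont_const | apply Ccont_add; auto]. Qed.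

Lemma increment_le_of_derivative_le (g : R -> R) (K a b : R) : a < b ->
  (forall t, a <= t <= b -> continuity_pt g t) ->
  (forall t, a < t < b -> exists l, derivable_pt_lim g t l /\ l <= K) ->
  g b - g a <= K * (b - a).
Proof.
  intros Hab Hc Hd.
  assert (pr1 : forall c, a < c < b -> derivable_pt g c).
  { intros c Hc'. destruct (constructive_indefinite_description _ (Hd c Hc')) as [l [Hl _]].
    exists l. exact Hl. }
  assert (pr2 : forall c, a < c < b -> derivable_pt id c) by (intros; apply derivable_pt_id).
  destruct (MVT g id a b pr1 pr2 Hab Hc
              (fun c _ => derivable_continuous_pt _ _ (derivable_pt_id c))) as [c [Pc HMVT]].
  destruct (Hd c Pc) as [l [Hl HlK]].
  rewrite (derive_pt_eq_0 g c l (pr1 c Pc) Hl) in HMVT.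
  rewrite (derive_pt_eq_0 id c 1 (pr2 c Pc) (derivable_pt_lim_id c)) in HMVT.
  unfold id in HMVT. nra.
Qed.

Lemma increment_le_of_derivative_le_except (g : R -> R) (K : R) (bs : list R) a b : a <= b ->
  (forall t, a <= t <= b -> continuity_pt g t) ->
  (forall t, a < t < b -> ~ In t bs -> exists l, derivable_pt_lim g t l /\ l <= K) ->
  g b - g a <= K * (b - a).
Proof.
  revert a b. induction bs as [|c bs IH]; intros a b Hab Hc Hd.
  - destruct (Req_dec a b) as [->|Hne]; [lra|].
    apply increment_le_of_derivative_le; [lra | exact Hc |]. intros t Ht; apply Hd; auto.
  - destruct (Rlt_dec a c) as [Hac|Hac]; [destruct (Rlt_dec c b) as [Hcb|Hcb]|].
    + assert (g c - g a <= K * (c - a)).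
      { apply IH; [lra | intros; apply Hc; lra |].
        intros t Ht Hn. apply Hd; [lra|]. intros [E|E]; [lra|auto]. }
      assert (g b - g c <= K * (b - c)).
      { apply IH; [lra | intros; apply Hc; lra |].
        intros t Ht Hn. apply Hd; [lra|]. intros [E|E]; [lra|auto]. }
      lra.
    + apply IH; auto. intros t Ht Hn. apply Hd; auto. intros [E|E]; [lra|auto].
    + apply IH; auto. intros t Ht Hn. apply Hd; auto. intros [E|E]; [lra|auto].
Qed.

Lemma Cmod_increment_le (f : R -> Cpx) (K : R) (bs : list R) a b : a <= b -> 0 <= K ->
  (forall t, a <= t <= b -> Ccont f t) ->
  (forall t, a < t < b -> ~ In t bs -> exists z, Cderiv f t z /\ Cmod z <= K) ->
  Cmod (Csub (f b) (f a)) <= K * (b - a).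
Proof.
  intros Hab HK Hc Hd.
  set (c := Csub (f b) (f a)).
  (* Projecting onto the direction of the increment reduces to the real mean value theorem. *)
  set (g := fun s => re c * re (f s) + im c * im (f s)).
  assert (Hg : g b - g a <= Cmod c * K * (b - a)).
  { apply increment_le_of_derivative_le_except with bs; auto.
    - intros t Ht. destruct (Hc t Ht) as [H1 H2]. unfold g.
      apply continuity_pt_plus; apply continuity_pt_mult; auto;
        apply continuity_pt_const; intros ? ?; auto.
    - intros t Ht Hn. destruct (Hd t Ht Hn) as [z [[D1 D2] Hz]].
      exists (re c * re z + im c * im z). split.
      + unfold g. eapply derivable_pt_lim_eq.
        * apply derivable_pt_lim_plus; apply derivable_pt_lim_mult; eauto; apply derivable_pt_lim_const.
        * cbv beta; ring.
      + eapply Rle_trans; [apply Rdot2_le_sqrt|]. fold (Cmod c) (Cmod z).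
        apply Rmult_le_compat_l; [apply Cmod_ge_0 | exact Hz]. }
  assert (E : g b - g a = Cmod c * Cmod c).
  { rewrite Cmod_sqr. unfold Cnorm2, g, c, Csub, Cadd, Copp; simpl. ring. }
  assert (Hc0 := Cmod_ge_0 c). assert (0 <= K * (b - a)) by nra. nra.
Qed.

(** * Norms and operator norms *)

Definition vnorm2 {A : Type} (l : list A) (u : A -> Cpx) : R :=
  sumR l (fun k => Cnorm2 (u k)).

Section Norms.
Context {A : Type} (l : list A).
Implicit Types (u : A -> Cpx) (M : A -> A -> Cpx).

Lemma vnorm_sqrt u : vnorm l u = sqrt (vnorm2 l u).
Proof. reflexivity. Qed.
Lemma vnorm2_ge_0 u : 0 <= vnorm2 l u.
Proof. apply sumR_ge0; intros; apply Cnorm2_ge_0. Qed.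
Lemma vnorm2_ge_entry u k : In k l -> Cnorm2 (u k) <= vnorm2 l u.
Proof. intros Hk. apply (sumR_ge_term l (fun k => Cnorm2 (u k))); auto. intros; apply Cnorm2_ge_0. Qed.
Lemma vnorm2_eq0 u : vnorm2 l u = 0 -> forall k, In k l -> u k = C0.
Proof.
  intros H0 k Hk. assert (Hk2 := vnorm2_ge_entry u k Hk). unfold Cnorm2 in Hk2.
  apply Cpx_ext; simpl; nra.
Qed.
Lemma vnorm2_zero u : (forall k, In k l -> u k = C0) -> vnorm2 l u = 0.
Proof.
  intros H. unfold vnorm2. rewrite (sumR_ext _ _ (fun _ => 0 * 0)).
  - rewrite sumR_mull. ring.
  - intros k Hk. rewrite H; auto. unfold Cnorm2; simpl; ring.
Qed.
Lemma vnorm2_scal c u : vnorm2 l (fun k => Cmul (RtoC c) (u k)) = c ^ 2 * vnorm2 l u.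
Proof. unfold vnorm2. rewrite <- sumR_mull. apply sumR_ext; intros; unfold Cnorm2; simpl; ring. Qed.
Lemma vnorm2_unit u : vnorm l u = 1 -> vnorm2 l u = 1.
Proof.
  intros H. rewrite vnorm_sqrt in H.
  rewrite <- (sqrt_sqrt (vnorm2 l u)) by apply vnorm2_ge_0. rewrite H; ring.
Qed.
Lemma vnorm2_le_1 u : vnorm l u <= 1 -> vnorm2 l u <= 1.
Proof.
  intros H. rewrite vnorm_sqrt in H. assert (Hn := vnorm2_ge_0 u).
  rewrite <- (sqrt_sqrt (vnorm2 l u)) by lra. assert (0 <= sqrt (vnorm2 l u)) by apply sqrt_pos. nra.
Qed.

Lemma matvec_zero M u : (forall k, In k l -> u k = C0) -> forall k, matvec l M u k = C0.
Proof. intros H k. apply sumC_eq0. intros a Ha. rewrite H; auto. ring. Qed.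

Lemma opnorm_set_bounded M : bound (opnorm_set l M).
Proof.
  exists (sqrt (sumR l (fun k => (sumR l (fun k' => Cmod (M k k'))) ^ 2))).
  intros s [u [Hu ->]]. rewrite vnorm_sqrt. apply sqrt_le_1_alt, sumR_le. intros k Hk.
  assert (Hu1 : forall k', In k' l -> Cmod (u k') <= 1).
  { intros k' Hk'. assert (Hk2 := vnorm2_ge_entry u k' Hk'). assert (Hs := vnorm2_le_1 u Hu).
    rewrite <- Cmod_sqr in Hk2. assert (Hc := Cmod_ge_0 (u k')). nra. }
  assert (Hm : Cmod (matvec l M u k) <= sumR l (fun k' => Cmod (M k k'))).
  { apply Cmod_sumC_le. intros k' Hk'. rewrite Cmod_mult.
    assert (Hu' := Hu1 k' Hk'). assert (Hc := Cmod_ge_0 (M k k')). nra. }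
  rewrite <- Cmod_sqr. assert (Hc := Cmod_ge_0 (matvec l M u k)). nra.
Qed.

Lemma opnorm_set_zero M : opnorm_set l M 0.
Proof.
  set (z := fun _ : A => C0). exists z.
  assert (Hz : forall k, In k l -> z k = C0) by reflexivity.
  rewrite !vnorm_sqrt, (vnorm2_zero z Hz), (vnorm2_zero _ (fun k _ => matvec_zero M z Hz k)), sqrt_0.
  split; lra.
Qed.

Lemma opnorm_is_lub M : is_lub (opnorm_set l M) (opnorm l M).
Proof.
  unfold opnorm. apply epsilon_spec.
  destruct (completeness _ (opnorm_set_bounded M)) as [s Hs].
  - exists 0. apply opnorm_set_zero.
  - exists s. exact Hs.
Qed.

Lemma opnorm_ge_0 M : 0 <= opnorm l M.
Proof. apply (proj1 (opnorm_is_lub M)), opnorm_set_zero. Qed.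

Lemma vnorm_matvec_le M u : vnorm l (matvec l M u) <= opnorm l M * vnorm l u.
Proof.
  rewrite !vnorm_sqrt. assert (H0 := vnorm2_ge_0 u).
  destruct (Req_dec (vnorm2 l u) 0) as [Hz|Hnz].
  - rewrite Hz, vnorm2_zero, sqrt_0; [lra|]. intros k _. apply matvec_zero, vnorm2_eq0, Hz.
  - set (s := sqrt (vnorm2 l u)).
    assert (Hs : 0 < s) by (apply sqrt_lt_R0; lra).
    set (u' := fun k => Cmul (RtoC (/ s)) (u k)).
    assert (Hv : vnorm l u' <= 1).
    { rewrite vnorm_sqrt. unfold u'. rewrite vnorm2_scal.
      replace (vnorm2 l u) with (s * s) by (apply sqrt_sqrt; lra).
      replace ((/ s) ^ 2 * (s * s)) with 1 by (field; lra). rewrite sqrt_1; lra. }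
    assert (Hm : matvec l M u' = fun k => Cmul (RtoC (/ s)) (matvec l M u k)).
    { extensionality k. unfold matvec, u'. rewrite <- sumC_mull. apply sumC_ext; intros; ring. }
    assert (Hle : vnorm l (matvec l M u') <= opnorm l M).
    { apply (proj1 (opnorm_is_lub M)). exists u'. split; auto. }
    rewrite Hm, vnorm_sqrt, vnorm2_scal, sqrt_mult_alt, <- Rsqr_pow2, sqrt_Rsqr in Hle
      by (apply pow2_ge_0 || (left; apply Rinv_0_lt_compat; lra)).
    apply (Rmult_le_reg_l (/ s)); [apply Rinv_0_lt_compat; lra|].
    replace (/ s * (opnorm l M * s)) with (opnorm l M) by (field; lra). exact Hle.
Qed.

Lemma vnorm2_matvec_le M u : vnorm2 l (matvec l M u) <= opnorm l M ^ 2 * vnorm2 l u.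
Proof.
  assert (H := vnorm_matvec_le M u). rewrite !vnorm_sqrt in H.
  assert (H1 := vnorm2_ge_0 u). assert (H2 := vnorm2_ge_0 (matvec l M u)).
  assert (H3 := opnorm_ge_0 M). assert (H4 := sqrt_pos (vnorm2 l u)).
  assert (H5 := sqrt_pos (vnorm2 l (matvec l M u))).
  rewrite <- (sqrt_sqrt (vnorm2 l (matvec l M u))), <- (sqrt_sqrt (vnorm2 l u)) by lra. nra.
Qed.

Lemma inner_addl u1 u2 w : inner l (fun k => Cadd (u1 k) (u2 k)) w = Cadd (inner l u1 w) (inner l u2 w).
Proof. unfold inner. rewrite <- sumC_add. apply sumC_ext; intros. apply Cpx_ext; simpl; ring. Qed.
Lemma inner_addr u w1 w2 : inner l u (fun k => Cadd (w1 k) (w2 k)) = Cadd (inner l u w1) (inner l u w2).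
Proof. unfold inner. rewrite <- sumC_add. apply sumC_ext; intros. apply Cpx_ext; simpl; ring. Qed.
Lemma inner_scall c u w : inner l (fun k => Cmul (RtoC c) (u k)) w = Cmul (RtoC c) (inner l u w).
Proof. unfold inner. rewrite <- sumC_mull. apply sumC_ext; intros. apply Cpx_ext; simpl; ring. Qed.
Lemma inner_scalr c u w : inner l u (fun k => Cmul (RtoC c) (w k)) = Cmul (RtoC c) (inner l u w).
Proof. unfold inner. rewrite <- sumC_mull. apply sumC_ext; intros. apply Cpx_ext; simpl; ring. Qed.

Lemma inner_matvec_hermitian M u w : hermitian l M ->
  inner l (matvec l M u) w = inner l u (matvec l M w).
Proof.
  intros HM. unfold inner, matvec.
  rewrite (sumC_ext l _ (fun k => sumC l (fun k' => Cmul (Cmul (Cconj (M k k')) (Cconj (u k'))) (w k)))).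
  2:{ intros k _. rewrite Cconj_sumC, <- sumC_mulr. apply sumC_ext; intros. rewrite Cconj_mul; auto. }
  rewrite sumC_swap. apply sumC_ext; intros k Hk. rewrite <- sumC_mull. apply sumC_ext; intros k' Hk'.
  rewrite <- (HM k' k) by auto. ring.
Qed.

Lemma Cmod_inner_matvec_le M a b :
  Cmod (inner l a (matvec l M b)) <= opnorm l M * (vnorm2 l a + vnorm2 l b) / 2.
Proof.
  assert (Hg0 := opnorm_ge_0 M). assert (Hb := vnorm2_matvec_le M b).
  assert (Ha0 := vnorm2_ge_0 a). assert (Hb0 := vnorm2_ge_0 b).
  destruct (Req_dec (opnorm l M) 0) as [Hz|Hnz].
  - assert (HMb : vnorm2 l (matvec l M b) = 0).
    { rewrite Hz in Hb. assert (H := vnorm2_ge_0 (matvec l M b)). nra. }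
    unfold inner. rewrite sumC_eq0, Cmod_C0, Hz; [lra|].
    intros k Hk. rewrite (vnorm2_eq0 _ HMb k Hk). ring.
  - set (g := opnorm l M) in *. assert (Hgp : 0 < g) by lra.
    (* Weighted AM-GM entrywise, with weight [g] balancing [vnorm2 (M b) <= g^2 vnorm2 b]. *)
    unfold inner. eapply Rle_trans.
    { apply Cmod_sumC_le. intros k _. apply (Cmod_conj_mul_le (a k) (matvec l M b k) g Hgp). }
    rewrite (sumR_ext l _ (fun k => / 2 * (g * Cnorm2 (a k)) + / 2 * (/ g * Cnorm2 (matvec l M b k))))
      by (intros; field; lra).
    rewrite sumR_add, !sumR_mull. fold (vnorm2 l a) (vnorm2 l (matvec l M b)).
    assert (/ g * vnorm2 l (matvec l M b) <= g * vnorm2 l b).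
    { apply (Rmult_le_reg_l g); auto.
      replace (g * (/ g * vnorm2 l (matvec l M b))) with (vnorm2 l (matvec l M b)) by (field; lra).
      nra. }
    lra.
Qed.
End Norms.

Lemma sumC_seq_eqb (F : nat -> Cpx) k len s : (s <= k < s + len)%nat ->
  sumC (seq s len) (fun i => if Nat.eqb k i then F i else C0) = F k.
Proof.
  revert s. induction len; intros s Hs; [lia|]. simpl. destruct (Nat.eqb_spec k s).
  - subst. rewrite sumC_eq0; [ring|]. intros i Hi. apply in_seq in Hi.
    destruct (Nat.eqb_spec s i); [lia | auto].
  - rewrite IHlen by lia. ring.
Qed.

Lemma sumC_idx_list n r w d f : sumC (idx_list n r w d) f =
  Cadd (sumC (seq 0 n) (fun j => sumC (seq 0 r) (fun a => sumC (seq 0 w) (fun b => f (inl (j, a, b))))))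
       (sumC (seq 0 d) (fun k => f (inr k))).
Proof.
  unfold idx_list. rewrite sumC_app, !sumC_map, sumC_flat_map.
  setoid_rewrite sumC_flat_map. setoid_rewrite sumC_map. reflexivity.
Qed.
Lemma sumR_idx_list n r w d f : sumR (idx_list n r w d) f =
  sumR (seq 0 n) (fun j => sumR (seq 0 r) (fun a => sumR (seq 0 w) (fun b => f (inl (j, a, b)))))
  + sumR (seq 0 d) (fun k => f (inr k)).
Proof.
  unfold idx_list. rewrite sumR_app, !sumR_map, sumR_flat_map.
  setoid_rewrite sumR_flat_map. setoid_rewrite sumR_map. reflexivity.
Qed.

Lemma sumC_idx_list_inl n r w d f : (forall k, f (inr k) = C0) -> sumC (idx_list n r w d) f =
  sumC (seq 0 n) (fun j => sumC (seq 0 w) (fun b => sumC (seq 0 r) (fun a => f (inl (j, a, b))))).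
Proof.
  intros Hf. rewrite sumC_idx_list, (sumC_eq0 (seq 0 d)) by auto.
  setoid_rewrite (sumC_swap (seq 0 r) (seq 0 w)). ring.
Qed.

Lemma matvec_HQ_inl {Sig} n r w d (h : Sig -> nat -> nat -> Cpx) x u j a b :
  (j < n)%nat -> (b < w)%nat ->
  matvec (idx_list n r w d) (HQ h x) u (inl (j, a, b)) =
  matvec (seq 0 r) (h (x j)) (fun a' => u (inl (j, a', b))) a.
Proof.
  intros Hj Hb. unfold matvec. rewrite sumC_idx_list, (sumC_eq0 (seq 0 d)) by (intros; simpl; ring).
  rewrite (sumC_ext _ _ (fun j' => if Nat.eqb j j' then sumC (seq 0 r) (fun a' =>
     sumC (seq 0 w) (fun b' => if Nat.eqb b b' then Cmul (h (x j') a a') (u (inl (j', a', b')))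
                                else C0)) else C0)).
  2:{ intros j' _. simpl. destruct (Nat.eqb_spec j j') as [<-|Hne]; simpl.
      - apply sumC_ext; intros a' _; apply sumC_ext; intros b' _. destruct (Nat.eqb b b'); simpl; ring.
      - apply sumC_eq0; intros; apply sumC_eq0; intros. ring. }
  rewrite sumC_seq_eqb by lia.
  rewrite (sumC_ext (seq 0 r) _ (fun a' => Cmul (h (x j) a a') (u (inl (j, a', b))))); [ring|].
  intros a' _. apply (sumC_seq_eqb (fun b' => Cmul (h (x j) a a') (u (inl (j, a', b'))))). lia.
Qed.

Lemma matvec_HQ_inr {Sig} n r w d (h : Sig -> nat -> nat -> Cpx) x u k :
  matvec (idx_list n r w d) (HQ h x) u (inr k) = C0.
Proof. apply sumC_eq0. intros [[[? ?] ?]|?] _; simpl; ring. Qed.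

(** * The derivative of W *)

Section Derivative.
Variables (Sig : Type) (Sig_dec : forall a b : Sig, {a = b} + {a <> b})
  (n m : nat) (X : nat -> nat -> Sig) (r w d : nat) (h : Sig -> nat -> nat -> Cpx)
  (HD : R -> Idx -> Idx -> Cpx) (alpha : R -> R) (t : R)
  (phi : nat -> R -> Idx -> Cpx) (Gamma : nat -> nat -> Cpx) (v : nat -> Cpx).
Hypothesis h_herm : forall y, hermitian (seq 0 r) (h y).
Hypothesis h_norm : forall y, opnorm (seq 0 r) (h y) <= 1.
Hypothesis HD_herm : hermitian (idx_list n r w d) (HD t).
Hypothesis phi_unit : forall p, (p < m)%nat -> vnorm (idx_list n r w d) (phi p t) = 1.
Hypothesis phi_schr : forall p k, (p < m)%nat -> In k (idx_list n r w d) ->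
  derivable_pt_lim (fun s => re (phi p s k)) t
    (im (matvec (idx_list n r w d) (Hx HD alpha h (X p) t) (phi p t) k)) /\
  derivable_pt_lim (fun s => im (phi p s k)) t
    (- re (matvec (idx_list n r w d) (Hx HD alpha h (X p) t) (phi p t) k)).
Hypothesis v_unit : vnorm (seq 0 m) v = 1.

Let L := idx_list n r w d.
Let coef p q := Cmul (Cmul (Cconj (v p)) (v q)) (Gamma p q).
Let Hphi p := matvec L (Hx HD alpha h (X p) t) (phi p t).
Let dphi p k := Cmul (mkC 0 (-1)) (Hphi p k).
(* [blk p j b] is the component of [phi p t] on the block |j>(x)C^r(x)|b>, [hblk] its image
   under h(x_j). *)
Let blk p j b a := phi p t (inl (j, a, b)).
Let hblk p j b a := matvec (seq 0 r) (h (X p j)) (blk p j b) a.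
Let GD j := hadamard Gamma (DeltaMat Sig_dec X j).
Let vblk j b a p := Cmul (v p) (blk p j b a).
Let vhblk j b a p := Cmul (v p) (hblk p j b a).

Definition dinner p q := sumC L (fun k =>
  Cadd (Cmul (Cconj (dphi p k)) (phi q t k)) (Cmul (Cconj (phi p t k)) (dphi q k))).
Definition dW := sumC (seq 0 m) (fun p => sumC (seq 0 m) (fun q => Cmul (coef p q) (dinner p q))).

Lemma W_derivable : Cderiv (Wfun m L v Gamma phi) t dW.
Proof.
  apply Cderiv_sumC; intros p Hp. apply Cderiv_sumC; intros q Hq. apply in_seq in Hp, Hq.
  apply Cderiv_scal, Cderiv_sumC; intros k Hk.
  apply Cderiv_mul; [apply Cderiv_conj|];
    [destruct (phi_schr p k) as [H1 H2] | destruct (phi_schr q k) as [H1 H2]]; try lia; auto;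
    split; (eapply derivable_pt_lim_eq; [eassumption|]); unfold dphi, Hphi, L; simpl; ring.
Qed.

Lemma dinner_commutator p q :
  dinner p q = Cmul (mkC 0 1) (Csub (inner L (Hphi p) (phi q t)) (inner L (phi p t) (Hphi q))).
Proof.
  unfold dinner, inner. rewrite <- sumC_sub, <- sumC_mull. apply sumC_ext; intros. unfold dphi.
  apply Cpx_ext; simpl; ring.
Qed.

Lemma Hphi_split p : Hphi p = fun k => Cadd (matvec L (HD t) (phi p t) k)
    (Cmul (RtoC (alpha t)) (matvec L (HQ h (X p)) (phi p t) k)).
Proof.
  extensionality k. unfold Hphi, matvec, Hx. rewrite <- sumC_mull, <- sumC_add.
  apply sumC_ext; intros. apply Cpx_ext; simpl; ring.
Qed.

(* The input-independent driving term cancels by hermiticity of [HD t]. *)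
Lemma inner_Hphi_sub p q : Csub (inner L (Hphi p) (phi q t)) (inner L (phi p t) (Hphi q)) =
  Cmul (RtoC (alpha t)) (Csub (inner L (matvec L (HQ h (X p)) (phi p t)) (phi q t))
                              (inner L (phi p t) (matvec L (HQ h (X q)) (phi q t)))).
Proof.
  rewrite !Hphi_split, inner_addl, inner_scall, inner_addr, inner_scalr.
  rewrite (inner_matvec_hermitian L (HD t)) by exact HD_herm. ring.
Qed.

Lemma inner_HQ_l p q : inner L (matvec L (HQ h (X p)) (phi p t)) (phi q t) =
  sumC (seq 0 n) (fun j => sumC (seq 0 w) (fun b => sumC (seq 0 r) (fun a =>
    Cmul (Cconj (hblk p j b a)) (blk q j b a)))).
Proof.
  unfold inner, L. rewrite sumC_idx_list_inl.
  - apply sumC_ext; intros j Hj; apply sumC_ext; intros b Hb; apply sumC_ext; intros a _.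
    apply in_seq in Hj, Hb. rewrite matvec_HQ_inl by lia. reflexivity.
  - intros k. rewrite matvec_HQ_inr. apply Cpx_ext; simpl; ring.
Qed.

Lemma inner_HQ_r p q : inner L (phi p t) (matvec L (HQ h (X q)) (phi q t)) =
  sumC (seq 0 n) (fun j => sumC (seq 0 w) (fun b => sumC (seq 0 r) (fun a =>
    Cmul (Cconj (blk p j b a)) (hblk q j b a)))).
Proof.
  unfold inner, L. rewrite sumC_idx_list_inl.
  - apply sumC_ext; intros j Hj; apply sumC_ext; intros b Hb; apply sumC_ext; intros a _.
    apply in_seq in Hj, Hb. rewrite matvec_HQ_inl by lia. reflexivity.
  - intros k. rewrite matvec_HQ_inr. ring.
Qed.

(* Blocks where the inputs agree ([X p j = X q j]) cancel by hermiticity of [h]. *)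
Lemma block_sub_DeltaMat p q j b :
  sumC (seq 0 r) (fun a => Csub (Cmul (Cconj (hblk p j b a)) (blk q j b a))
                                (Cmul (Cconj (blk p j b a)) (hblk q j b a))) =
  sumC (seq 0 r) (fun a => Cmul (DeltaMat Sig_dec X j p q)
    (Csub (Cmul (Cconj (hblk p j b a)) (blk q j b a)) (Cmul (Cconj (blk p j b a)) (hblk q j b a)))).
Proof.
  rewrite sumC_mull. unfold DeltaMat. destruct (Sig_dec (X p j) (X q j)) as [e|e]; [|ring].
  rewrite sumC_sub. unfold hblk. rewrite e.
  change (sumC (seq 0 r) (fun a => Cmul (Cconj (matvec (seq 0 r) (h (X q j)) (blk p j b) a)) (blk q j b a)))
    with (inner (seq 0 r) (matvec (seq 0 r) (h (X q j)) (blk p j b)) (blk q j b)).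
  rewrite inner_matvec_hermitian by apply h_herm. unfold inner. ring.
Qed.

Lemma dinner_blocks p q : dinner p q =
  Cmul (mkC 0 (alpha t)) (sumC (seq 0 n) (fun j => sumC (seq 0 w) (fun b => sumC (seq 0 r) (fun a =>
    Cmul (DeltaMat Sig_dec X j p q)
      (Csub (Cmul (Cconj (hblk p j b a)) (blk q j b a)) (Cmul (Cconj (blk p j b a)) (hblk q j b a))))))).
Proof.
  rewrite dinner_commutator, inner_Hphi_sub, inner_HQ_l, inner_HQ_r.
  repeat setoid_rewrite <- sumC_sub. setoid_rewrite block_sub_DeltaMat.
  apply Cpx_ext; simpl; ring.
Qed.

Lemma sumC_coef_block j b a :
  sumC (seq 0 m) (fun p => sumC (seq 0 m) (fun q => Cmul (coef p q) (Cmul (DeltaMat Sig_dec X j p q)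
    (Csub (Cmul (Cconj (hblk p j b a)) (blk q j b a)) (Cmul (Cconj (blk p j b a)) (hblk q j b a)))))) =
  Csub (inner (seq 0 m) (vhblk j b a) (matvec (seq 0 m) (GD j) (vblk j b a)))
       (inner (seq 0 m) (vblk j b a) (matvec (seq 0 m) (GD j) (vhblk j b a))).
Proof.
  unfold inner, matvec. rewrite <- sumC_sub. apply sumC_ext; intros p _.
  rewrite <- !sumC_mull, <- sumC_sub. apply sumC_ext; intros q _.
  unfold coef, GD, hadamard, vhblk, vblk. apply Cpx_ext; simpl; ring.
Qed.

Definition query_sum := sumC (seq 0 n) (fun j => sumC (seq 0 w) (fun b => sumC (seq 0 r) (fun a =>
  Csub (inner (seq 0 m) (vhblk j b a) (matvec (seq 0 m) (GD j) (vblk j b a)))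
       (inner (seq 0 m) (vblk j b a) (matvec (seq 0 m) (GD j) (vhblk j b a)))))).

Lemma dW_eq : dW = Cmul (mkC 0 (alpha t)) query_sum.
Proof.
  unfold dW. setoid_rewrite dinner_blocks.
  assert (Hcomm : forall x y z, Cmul x (Cmul y z) = Cmul y (Cmul x z)) by (intros; ring).
  setoid_rewrite (Hcomm (coef _ _)).
  setoid_rewrite (sumC_mull (seq 0 m) (mkC 0 (alpha t))). rewrite sumC_mull. f_equal.
  repeat setoid_rewrite <- sumC_mull. rewrite sumC_swap_2_3.
  apply sumC_ext; intros j _; apply sumC_ext; intros b _; apply sumC_ext; intros a _.
  apply sumC_coef_block.
Qed.

Lemma sum_vnorm2_blk_le p : (p < m)%nat ->
  sumR (seq 0 n) (fun j => sumR (seq 0 w) (fun b => vnorm2 (seq 0 r) (blk p j b))) <= 1.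
Proof.
  intros Hp. rewrite <- (vnorm2_unit _ _ (phi_unit p Hp)). unfold vnorm2 at 2. rewrite sumR_idx_list.
  assert (0 <= sumR (seq 0 d) (fun k => Cnorm2 (phi p t (inr k))))
    by (apply sumR_ge0; intros; apply Cnorm2_ge_0).
  setoid_rewrite (sumR_swap (seq 0 r) (seq 0 w)). unfold vnorm2, blk. lra.
Qed.

Lemma vnorm2_hblk_le p j b : vnorm2 (seq 0 r) (hblk p j b) <= vnorm2 (seq 0 r) (blk p j b).
Proof.
  assert (H := vnorm2_matvec_le (seq 0 r) (h (X p j)) (blk p j b)).
  assert (H1 := opnorm_ge_0 (seq 0 r) (h (X p j))). assert (H2 := h_norm (X p j)).
  assert (H3 := vnorm2_ge_0 (seq 0 r) (blk p j b)).
  change (vnorm2 (seq 0 r) (matvec (seq 0 r) (h (X p j)) (blk p j b)) <= vnorm2 (seq 0 r) (blk p j b)).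
  assert (opnorm (seq 0 r) (h (X p j)) ^ 2 <= 1) by nra. nra.
Qed.

Lemma sum_vnorm2_vblocks_le : sumR (seq 0 n) (fun j => sumR (seq 0 w) (fun b => sumR (seq 0 r) (fun a =>
   vnorm2 (seq 0 m) (vhblk j b a) + vnorm2 (seq 0 m) (vblk j b a)))) <= 2.
Proof.
  assert (Hsplit : forall j b a, vnorm2 (seq 0 m) (vhblk j b a) + vnorm2 (seq 0 m) (vblk j b a) =
    sumR (seq 0 m) (fun p => Cnorm2 (v p) * (Cnorm2 (hblk p j b a) + Cnorm2 (blk p j b a)))).
  { intros. unfold vnorm2. rewrite <- sumR_add. apply sumR_ext; intros.
    unfold vhblk, vblk, Cnorm2; simpl; ring. }
  setoid_rewrite Hsplit.
  setoid_rewrite (sumR_swap (seq 0 r) (seq 0 m)). setoid_rewrite (sumR_swap (seq 0 w) (seq 0 m)).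
  rewrite (sumR_swap (seq 0 n) (seq 0 m)).
  apply Rle_trans with (sumR (seq 0 m) (fun p => 2 * Cnorm2 (v p))).
  2:{ rewrite sumR_mull. fold (vnorm2 (seq 0 m) v). rewrite vnorm2_unit by exact v_unit. lra. }
  apply sumR_le; intros p Hp. apply in_seq in Hp.
  repeat setoid_rewrite sumR_mull. rewrite (Rmult_comm 2).
  apply Rmult_le_compat_l; [apply Cnorm2_ge_0|].
  setoid_rewrite sumR_add.
  apply Rle_trans with (sumR (seq 0 n) (fun j => sumR (seq 0 w) (fun b => 2 * vnorm2 (seq 0 r) (blk p j b)))).
  - apply sumR_le; intros j _; apply sumR_le; intros b _. assert (H := vnorm2_hblk_le p j b).
    unfold vnorm2 in *. lra.
  - repeat setoid_rewrite sumR_mull. assert (H := sum_vnorm2_blk_le p ltac:(lia)). lra.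
Qed.

Lemma Cmod_query_sum_le Mx : (forall j, (j < n)%nat -> opnorm (seq 0 m) (GD j) <= Mx) -> 0 <= Mx ->
  Cmod query_sum <= 2 * Mx.
Proof.
  intros HM HM0. unfold query_sum. eapply Rle_trans.
  - apply Cmod_sumC_le with (F := fun j => sumR (seq 0 w) (fun b => sumR (seq 0 r) (fun a =>
      Mx * (vnorm2 (seq 0 m) (vhblk j b a) + vnorm2 (seq 0 m) (vblk j b a))))).
    intros j Hj. apply in_seq in Hj. apply Cmod_sumC_le; intros b _. apply Cmod_sumC_le; intros a _.
    eapply Rle_trans; [apply Cmod_sub_le|].
    assert (H1 := Cmod_inner_matvec_le (seq 0 m) (GD j) (vhblk j b a) (vblk j b a)).
    assert (H2 := Cmod_inner_matvec_le (seq 0 m) (GD j) (vblk j b a) (vhblk j b a)).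
    assert (H3 := HM j ltac:(lia)). assert (H4 := vnorm2_ge_0 (seq 0 m) (vhblk j b a)).
    assert (H5 := vnorm2_ge_0 (seq 0 m) (vblk j b a)). nra.
  - repeat setoid_rewrite sumR_mull. assert (H := sum_vnorm2_vblocks_le). nra.
Qed.

Lemma W_derivative_bound Mx : Rabs (alpha t) <= 1 ->
  (forall j, (j < n)%nat -> opnorm (seq 0 m) (GD j) <= Mx) -> 0 <= Mx ->
  exists z, Cderiv (Wfun m L v Gamma phi) t z /\ Cmod z <= 2 * Mx.
Proof.
  intros Halpha HM HM0. exists dW. split; [apply W_derivable|].
  rewrite dW_eq, Cmod_mult, Cmod_imag.
  assert (H := Cmod_query_sum_le Mx HM HM0). assert (Hq := Cmod_ge_0 query_sum).
  assert (Ha := Rabs_pos (alpha t)). nra.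
Qed.
End Derivative.

Lemma Wfun_continuous m l v Gamma phi t :
  (forall p k, (p < m)%nat -> In k l -> Ccont (fun s => phi p s k) t) ->
  Ccont (Wfun m l v Gamma phi) t.
Proof.
  intros Hphi. apply Ccont_sumC; intros p Hp. apply Ccont_sumC; intros q Hq. apply in_seq in Hp, Hq.
  apply Ccont_mul; [apply Ccont_const|]. apply Ccont_sumC; intros k Hk.
  apply Ccont_mul; [apply Ccont_conj|]; apply Hphi; auto; lia.
Qed.

Theorem mainTheorem6
  (Sig : Type) (Sig_dec : forall a b : Sig, {a = b} + {a <> b})
  (Sig_fin : exists e : list Sig, forall a, In a e)
  (n m : nat) (X : nat -> nat -> Sig)
  (X_distinct : forall p q, (p < m)%nat -> (q < m)%nat -> p <> q ->
                  exists j, (j < n)%nat /\ X p j <> X q j)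
  (r w d : nat) (h : Sig -> nat -> nat -> Cpx)
  (h_herm : forall y, hermitian (seq 0 r) (h y))
  (h_norm : forall y, opnorm (seq 0 r) (h y) <= 1)
  (T : R) (HT : 0 <= T)
  (HD : R -> Idx -> Idx -> Cpx) (alpha : R -> R)
  (HD_herm : forall t, 0 <= t <= T -> hermitian (idx_list n r w d) (HD t))
  (alpha_bd : forall t, 0 <= t <= T -> Rabs (alpha t) <= 1)
  (pw_cont : exists bs : list R, forall t, 0 < t < T -> ~ In t bs ->
               ham_continuous_at (idx_list n r w d) HD alpha t)
  (phi : nat -> R -> Idx -> Cpx)
  (phi_unit : forall p t, (p < m)%nat -> 0 <= t <= T ->
                vnorm (idx_list n r w d) (phi p t) = 1)
  (phi_cont : forall p k t, (p < m)%nat -> In k (idx_list n r w d) -> 0 <= t <= T ->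
                continuity_pt (fun s => re (phi p s k)) t /\
                continuity_pt (fun s => im (phi p s k)) t)
  (phi_schr : forall p k t, (p < m)%nat -> In k (idx_list n r w d) -> 0 < t < T ->
                ham_continuous_at (idx_list n r w d) HD alpha t ->
                derivable_pt_lim (fun s => re (phi p s k)) t
                  (im (matvec (idx_list n r w d) (Hx HD alpha h (X p) t) (phi p t) k)) /\
                derivable_pt_lim (fun s => im (phi p s k)) t
                  (- re (matvec (idx_list n r w d) (Hx HD alpha h (X p) t) (phi p t) k)))
  (Gamma : nat -> nat -> Cpx) (Gamma_herm : hermitian (seq 0 m) Gamma)
  (v : nat -> Cpx) (v_unit : vnorm (seq 0 m) v = 1) :
  let M := maxR (map (fun j => opnorm (seq 0 m) (hadamard Gamma (DeltaMat Sig_dec X j)))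
                     (seq 0 n)) in
  let W := Wfun m (idx_list n r w d) v Gamma phi in
  (forall t, 0 < t < T -> ham_continuous_at (idx_list n r w d) HD alpha t ->
     exists dre dim,
       derivable_pt_lim (fun s => re (W s)) t dre /\
       derivable_pt_lim (fun s => im (W s)) t dim /\
       sqrt (dre ^ 2 + dim ^ 2) <= 2 * M) /\
  Cmod (Csub (W T) (W 0)) <= 2 * T * M.
Proof.
  intros M W.
  assert (HM0 : 0 <= M) by apply maxR_ge_0.
  assert (HMj : forall j, (j < n)%nat ->
                  opnorm (seq 0 m) (hadamard Gamma (DeltaMat Sig_dec X j)) <= M).
  { intros j Hj. apply maxR_ge.
    apply (in_map (fun j => opnorm (seq 0 m) (hadamard Gamma (DeltaMat Sig_dec X j)))), in_seq. lia. }
  assert (Hderiv : forall t, 0 < t < T -> ham_continuous_at (idx_list n r w d) HD alpha t ->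
                     exists z, Cderiv W t z /\ Cmod z <= 2 * M).
  { intros t Ht Hc.
    apply (W_derivative_bound Sig Sig_dec n m X r w d h HD alpha t phi Gamma v); auto.
    - apply HD_herm; lra.
    - intros p Hp. apply phi_unit; auto; lra.
    - apply alpha_bd; lra. }
  split.
  - intros t Ht Hc. destruct (Hderiv t Ht Hc) as [z [[Hre Him] Hz]]. exists (re z), (im z). auto.
  - destruct pw_cont as [bs Hbs]. replace (2 * T * M) with (2 * M * (T - 0)) by ring.
    apply Cmod_increment_le with bs; [lra | lra | |].
    + intros t Ht. apply Wfun_continuous. intros p k Hp Hk. apply phi_cont; auto.
    + intros t Ht Hn. apply Hderiv; auto.
Qed.
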